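(* Let $\mathcal C$ be a Suslin scheme in a topological space $Y$ consisting of closed subsets of $Y$, and let $T$ be a nonempty well-founded tree with leaf rank $r_l(T)=\lambda+n$ ($\lambda$ limit or $0$, $n\in\omega$). Then (i) $\mathbf R_T(\mathcal C)\in\mathcal F_{\lambda+2n}(Y)$; (ii) if $T\ne\{\emptyset\}$ and $\mathrm{ims}_T(\emptyset)$ is finite, then $n\ge1$ and $\mathbf R_T(\mathcal C)\in\mathcal F_{\lambda+2n-1}(Y)$.
   Context: $\mathcal F$-Borel hierarchy: $\mathcal F_0(Y)$ closed sets; for $0<\alpha<\omega_1$, $\mathcal F_\alpha(Y)$ = countable unions (odd $\alpha$) or countable intersections (even $\alpha$) of members of $\bigcup_{\beta<\alpha}\mathcal F_\beta(Y)$, with $\lambda+m$ ($\lambda$ limit or 0) having the parity of $m$. A tree is a subset of $\omega^{<\omega}$ closed under initial segments, well-founded if it has no infinite branch; $\mathrm{ims}_T(t)=\{t^\frown n\in T\}$, $T^t=\{t':t^\frown t'\in T\}$; leaf rank $r_l(T^t)=\sup\{r_l(T^s)+1:s\in\mathrm{ims}_T(t)\}$ ($\sup\emptyset=0$), $r_l(T)=r_l(T^\emptyset)$. A Suslin scheme is a family $(C(s))_{s\in\omega^{<\omega}}$ with $C(t)\subset C(s)$ whenever $t$ extends $s$. A map $\varphi:T\to\omega^{<\omega}$ is admissible if it is monotone w.r.t. extension and $|\varphi(t)|=t(0)+\dots+t(k)$ for $t=(t(0),\dots,t(k))$. $\mathbf R_T(\mathcal C)=\{x\in C(\emptyset):\exists$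 admissible $\varphi:T\to\omega^{<\omega}$ with $x\in C(\varphi(t))$ for all $t\in T\}$. *)

From mathcomp Require Import all_boot.
Set Implicit Arguments. Unset Strict Implicit. Unset Printing Implicit Defensive.

Record topology (Y : Type) := Topology {
  open : (Y -> Prop) -> Prop;
  open_full : open (fun _ => True);
  open_union : forall (I : Type) (U : I -> Y -> Prop),
      (forall i, open (U i)) -> open (fun y => exists i, U i y);
  open_inter : forall U V, open U -> open V -> open (fun y => U y /\ V y);
  open_ext : forall U V, (forall y, U y <-> V y) -> open U -> open V
}.

Definition is_closed (Y : Type) (tau : topology Y) (A : Y -> Prop) : Prop :=
  open tau (fun y => ~ A y).

Inductive ord : Type :=
| OZ : ord
| OS : ord -> ord
| OL : (nat -> ord) -> ord.

(* the standard order on Brouwer trees (Kraus--Nordvall Forsberg--Xu) *)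
Inductive ole : ord -> ord -> Prop :=
| ole_zero b : ole OZ b
| ole_trans a b c : ole a b -> ole b c -> ole a c
| ole_succ a b : ole a b -> ole (OS a) (OS b)
| ole_cocone a f k : ole a (f k) -> ole a (OL f)
| ole_limiting f b : (forall k, ole (f k) b) -> ole (OL f) b.

Definition olt (a b : ord) : Prop := ole (OS a) b.
Definition oeq (a b : ord) : Prop := ole a b /\ ole b a.

Definition oadd (l : ord) (m : nat) : ord := iter m OS l.

Definition limit_or_zero (l : ord) : Prop :=
  forall b, olt b l -> olt (OS b) l.

Definition odd_ord (a : ord) : Prop :=
  exists l m, limit_or_zero l /\ oeq a (oadd l m) /\ odd m.

Inductive Fclass (Y : Type) (tau : topology Y) : ord -> (Y -> Prop) -> Prop :=
| F_zero a A : ole a OZ -> is_closed tau A -> Fclass tau a A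
| F_union a A (b : nat -> ord) (B : nat -> Y -> Prop) :
    olt OZ a -> odd_ord a ->
    (forall k, olt (b k) a) -> (forall k, Fclass tau (b k) (B k)) ->
    (forall y, A y <-> exists k, B k y) -> Fclass tau a A
| F_inter a A (b : nat -> ord) (B : nat -> Y -> Prop) :
    olt OZ a -> ~ odd_ord a ->
    (forall k, olt (b k) a) -> (forall k, Fclass tau (b k) (B k)) ->
    (forall y, A y <-> forall k, B k y) -> Fclass tau a A.

Definition is_tree (T : pred (seq nat)) : Prop :=
  forall s t, T (s ++ t) -> T s.

Definition well_founded_tree (T : pred (seq nat)) : Prop :=
  ~ exists f : nat -> nat, forall k, T (mkseq f k).

(* leaf_rank T t a : a is the leaf rank r_l(T^t), computed recursively:
   sup { r_l(T^(t^k)) + 1 : t^k in T }  (sup of empty = 0) *)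
Inductive leaf_rank (T : pred (seq nat)) : seq nat -> ord -> Prop :=
| lr_node t (r : nat -> ord) :
    (forall k, T (rcons t k) -> leaf_rank T (rcons t k) (r k)) ->
    leaf_rank T t (OL (fun k => if T (rcons t k) then OS (r k) else OZ)).

Definition suslin_scheme (Y : Type) (C : seq nat -> Y -> Prop) : Prop :=
  forall s t y, C (s ++ t) y -> C s y.

Definition admissible (T : pred (seq nat)) (phi : seq nat -> seq nat) : Prop :=
  (forall s t, T s -> T t -> prefix s t -> prefix (phi s) (phi t)) /\
  (forall t, T t -> size (phi t) = sumn t).

Definition R_T (Y : Type) (T : pred (seq nat)) (C : seq nat -> Y -> Prop)
  (y : Y) : Prop :=
  C [::] y /\ exists phi, admissible T phi /\ forall t, T t -> C (phi t) y.

From mathcomp Require Import all_boot.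
From Stdlib Require Import Classical IndefiniteDescription.
From mathcomp Require Import zify.
Set Implicit Arguments. Unset Strict Implicit. Unset Printing Implicit Defensive.

(* R_T(C) unfolds along the tree: x is in R_{T^t}(C) iff x is in C([]) and, for every
   immediate successor t^k, x is in R_{T^(t^k)}(C_s) for some s of length k, where
   C_s(u) = C(s^u).  So R_{T^t}(C) is a closed set intersected with countable unions,
   one per child, of sets handled by induction on the leaf rank: a child of rank
   l' + n' < l + n yields a union at level l' + 2n' + 1 < l + 2n, and the intersection
   stays at the even level l + 2n.  When the root has finitely many children its rank is
   a maximum, hence a successor l + (n + 1), and the finite intersection of unions can be
   rewritten as one countable union, over the finite lists of the s's, of
   intersections at level l + 2n, which lands in level l + 2n + 1. *)

(* A structurally recursive presentation of [ole] (Kraus--Nordvall Forsberg--Xu):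
   unlike the inductive [ole], whose transitivity constructor blocks inversion,
   it computes on both arguments, so transitivity, irreflexivity and totality
   are proved on it and transported along [ole_sleP]. *)
Fixpoint sle (a b : ord) {struct a} : Prop :=
  match a with
  | OZ => True
  | OS a' => (fix slt_a' (b : ord) : Prop :=
               match b with
               | OZ => False
               | OS b' => sle a' b'
               | OL g => exists k, slt_a' (g k)
               end) b
  | OL f => forall k, sle (f k) b
  end.

Definition slt (a b : ord) : Prop := sle (OS a) b.

Lemma sltS a b : slt a (OS b) = sle a b. Proof. by []. Qed.
Lemma sltL a g : slt a (OL g) = exists k, slt a (g k). Proof. by []. Qed.
Lemma sleS a b : sle (OS a) b = slt a b. Proof. by []. Qed.
Lemma sleL f b : sle (OL f) b = forall k, sle (f k) b. Proof. by []. Qed.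

Lemma sle_cocone a g k : sle a (g k) -> sle a (OL g).
Proof.
elim: a => [//|a _|f IH] H; first by rewrite sleS sltL; exists k.
by move=> j; apply: IH.
Qed.

Lemma sle_refl a : sle a a.
Proof.
elim: a => [//|a IH|f IH]; first by rewrite sleS sltS.
by move=> k; apply: (@sle_cocone _ _ k).
Qed.

Lemma sle_trans_mixed a :
  (forall b c, sle a b -> sle b c -> sle a c) /\
  (forall b c, sle a b -> slt b c -> slt a c) /\
  (forall b c, slt a b -> sle b c -> slt a c).
Proof.
suff lt_trans x : (forall b c, sle x b -> sle b c -> sle x c) ->
    (forall b c, sle x b -> slt b c -> slt x c) /\
    (forall b c, slt x b -> sle b c -> slt x c).
  elim: a => [|a [_ [_ IH]]|f IH]; apply: (fun H => conj H (lt_trans _ H)) => //.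
  move=> b c; rewrite !sleL => Hb Hc k; exact: (proj1 (IH k) _ _ (Hb k) Hc).
move=> le_trans.
have le_lt b c : sle x b -> slt b c -> slt x c.
  elim: c => [//|c _|h IH] Hb; first by rewrite !sltS; exact: le_trans.
  by rewrite !sltL => [[k Hk]]; exists k; apply: IH.
split=> // b; elim: b => [//|b _|g IH] c; first by rewrite sltS sleS; exact: le_lt.
by rewrite sltL sleL => [[k Hk]] Hc; exact: IH Hk (Hc k).
Qed.

Lemma sle_trans a b c : sle a b -> sle b c -> sle a c.
Proof. exact: (proj1 (sle_trans_mixed a)). Qed.

Lemma ole_sleP a b : ole a b <-> sle a b.
Proof.
split.
- elim=> {a b} [//|a b c _ H1 _ H2|a b _ H|a f k _ H|f b _ H] //.
  + exact: sle_trans H1 H2.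
  + exact: sle_cocone H.
- elim: a b => [|a IH|f IH] b; first by constructor.
  + rewrite sleS; elim: b => [//|b _|g IHg]; first by rewrite sltS => /IH/ole_succ.
    by rewrite sltL => [[k /IHg]]; apply: ole_cocone.
  + by rewrite sleL => H; apply: ole_limiting => k; apply: IH.
Qed.

Lemma slt_irrefl a : ~ slt a a.
Proof.
elim: a => [//|a IH|f IH]; first by rewrite sltS sleS.
rewrite sltL => [[k Hk]]; apply: (IH k).
exact: (proj1 (proj2 (sle_trans_mixed (f k)))) _ _ (@sle_cocone _ f k (sle_refl _)) Hk.
Qed.

Lemma sle_total a b : sle a b \/ slt b a.
Proof.
elim: a b => [|a IH|f IH] b; first by left.
- rewrite sleS sltS; elim: b => [|b _|g IHg]; first by right.
    by rewrite sltS sleS; apply: IH.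
  rewrite sltL sleL; case: (classic (exists k, slt a (g k))) => [|Hn]; first by left.
  right=> k; case: (IHg k) => // Hk; case: Hn; by exists k.
- rewrite sleL sltL; case: (classic (forall k, sle (f k) b)) => [|/not_all_ex_not [k Hk]].
    by left.
  by right; exists k; case: (IH k b).
Qed.

Lemma ole_refl a : ole a a.
Proof. exact/ole_sleP/sle_refl. Qed.

Lemma olt_irrefl a : ~ olt a a.
Proof. by move/ole_sleP/slt_irrefl. Qed.

Lemma ole_total a b : ole a b \/ olt b a.
Proof. by case: (sle_total a b) => /ole_sleP; [left | right]. Qed.

Lemma ole_S_inv a b : ole (OS a) (OS b) -> ole a b.
Proof. by move/ole_sleP => H; apply/ole_sleP. Qed.

Lemma olt_OZ a : ~ olt a OZ.
Proof. by move/ole_sleP. Qed.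

Lemma olt_OL_inv b f : olt b (OL f) -> exists k, olt b (f k).
Proof. by move/ole_sleP=> [k Hk]; exists k; apply/ole_sleP. Qed.

Lemma ole_S a : ole a (OS a).
Proof.
elim: a => [|a IH|f IH]; [exact: ole_zero | exact: ole_succ |].
apply: ole_limiting => k; apply: ole_trans (IH k) (ole_succ _).
exact: ole_cocone (ole_refl _).
Qed.

Lemma olt_ole a b : olt a b -> ole a b.
Proof. exact: ole_trans (ole_S a). Qed.

Lemma ole_eq_or_lt a b : ole a b -> oeq a b \/ olt a b.
Proof. by move=> Hab; case: (ole_total b a) => H; [left | right]. Qed.

Lemma oeq_refl a : oeq a a.
Proof. by split; apply: ole_refl. Qed.

Lemma oeq_trans a b c : oeq a b -> oeq b c -> oeq a c.
Proof. by move=> [Hab Hba] [Hbc Hcb]; split; apply: ole_trans; eassumption. Qed.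

Lemma oaddS l m : oadd l m.+1 = OS (oadd l m).
Proof. by []. Qed.

Lemma oaddD l m p : oadd l (m + p) = oadd (oadd l p) m.
Proof. by rewrite /oadd iterD. Qed.

Lemma ole_oadd x m : ole x (oadd x m).
Proof. by elim: m => [|m IH]; [apply: ole_refl | apply: ole_trans IH (ole_S _)]. Qed.

Lemma limit_oadd l x m : limit_or_zero l -> olt x l -> olt (oadd x m) l.
Proof. by move=> Hl Hx; elim: m => [|m IH] //; apply: Hl. Qed.

Lemma limit_neq_S l x : limit_or_zero l -> ~ oeq l (OS x).
Proof.
move=> Hl [Hlx Hxl]; apply: (@olt_irrefl x); apply: ole_S_inv.
exact: ole_trans (Hl x Hxl) Hlx.
Qed.

Lemma oadd_inj l l' i j : limit_or_zero l -> limit_or_zero l' ->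
  oeq (oadd l i) (oadd l' j) -> i = j.
Proof.
move=> Hl Hl'; elim: i j => [|i IH] [|j] // H.
- by case: (limit_neq_S Hl H).
- by case: (limit_neq_S Hl' (conj (proj2 H) (proj1 H))).
- by congr S; apply: IH; case: H => /ole_S_inv H1 /ole_S_inv H2.
Qed.

Lemma odd_ord_oeq a b : oeq a b -> odd_ord a -> odd_ord b.
Proof.
move=> [Hab Hba] [l [m [Hl [Hm Ho]]]]; exists l, m; split=> //; split=> //.
exact: oeq_trans (conj Hba Hab) Hm.
Qed.

Lemma oadd_double_not_odd l n : limit_or_zero l -> ~ odd_ord (oadd l (2 * n)).
Proof.
move=> Hl [l' [m [Hl' [Hm Ho]]]].
by move: Ho; rewrite -(oadd_inj Hl Hl' Hm) mul2n odd_double.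
Qed.

Lemma oadd_doubleS_odd l n : limit_or_zero l -> odd_ord (oadd l (2 * n).+1).
Proof.
move=> Hl; exists l, (2 * n).+1; rewrite /= mul2n odd_double.
by split=> //; split=> //; apply: oeq_refl.
Qed.

Lemma ord_normal_form a : exists l n, limit_or_zero l /\ oeq a (oadd l n).
Proof.
elim: a => [|a [l [n [Hl [H1 H2]]]]|f IH].
- by exists OZ, 0; split; [move=> b /olt_OZ | exact: oeq_refl].
- by exists l, n.+1; split=> //; split; apply: ole_succ.
- case: (classic (limit_or_zero (OL f))) => [Hlim|].
    by exists (OL f), 0; split=> //; exact: oeq_refl.
  rewrite /limit_or_zero => /not_all_ex_not [b /(imply_to_and (olt _ _)) [Hb HSb]].
  have [k Hk] := olt_OL_inv Hb.
  case: (ole_total (OL f) (OS b)) => [HfS|/HSb //].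
  have [l [n [Hl Hkl]]] := IH k; exists l, n; split=> //.
  apply: oeq_trans Hkl; split; [exact: ole_trans HfS Hk | exact: ole_cocone (ole_refl _)].
Qed.

Lemma ole_oadd_double l' n' l n : limit_or_zero l ->
  ole (oadd l' n') (oadd l n) -> ole (oadd l' (2 * n')) (oadd l (2 * n)).
Proof.
move=> Hl; elim: n n' => [|n IH] [|n'] // H.
- rewrite (_ : 2 * n'.+1 = (n'.+1 + n').+1); last by lia.
  by rewrite oaddS oaddD; apply: limit_oadd.
- apply: ole_trans H _; rewrite (_ : 2 * n.+1 = n.+1 + n.+1); last by lia.
  by rewrite oaddD; apply: ole_oadd.
- have doubleS m : 2 * m.+1 = (2 * m).+2 by lia.
  by rewrite !doubleS !oaddS; do 2 apply: ole_succ; apply/IH/ole_S_inv.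
Qed.

Lemma olt_oadd_double l' n' l n : limit_or_zero l ->
  olt (oadd l' n') (oadd l n) -> olt (oadd l' (2 * n').+1) (oadd l (2 * n)).
Proof.
move=> Hl Hlt; have := ole_oadd_double (n' := n'.+1) Hl Hlt.
by rewrite (_ : 2 * n'.+1 = (2 * n').+2) //; lia.
Qed.

Lemma ole_max_finite (f : nat -> ord) N :
  exists m, forall k, k < N -> ole (f k) (f m).
Proof.
elim: N => [|N [m Hm]]; first by exists 0.
case: (ole_total (f N) (f m)) => HN.
- by exists m => k; rewrite ltnS leq_eqVlt => /orP [/eqP -> | /Hm].
- exists N => k; rewrite ltnS leq_eqVlt => /orP [/eqP -> | /Hm Hk].
    exact: ole_refl.
  exact: ole_trans Hk (olt_ole HN).
Qed.

Section FBorel.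
Variables (Y : Type) (tau : topology Y).
Implicit Types (A : Y -> Prop) (a b c : ord).

Lemma closed_ext A A' :
  is_closed tau A -> (forall y, A y <-> A' y) -> is_closed tau A'.
Proof. by move=> HA E; apply: open_ext HA => y; split=> nA HA; apply/nA/E. Qed.

Lemma closed_False : is_closed tau (fun _ => False).
Proof. by apply: (open_ext _ (open_full tau)) => y; split=> // _ []. Qed.

Lemma closed_True : is_closed tau (fun _ => True).
Proof.
have HU := @open_union _ tau False (fun _ _ => True) (fun i => match i with end).
by apply: (open_ext _ HU) => y; split=> [[[]] | /(_ I) []].
Qed.

Lemma closed_bigcap (I : Type) (B : I -> Y -> Prop) :
  (forall i, is_closed tau (B i)) -> is_closed tau (fun y => forall i, B i y).
Proof.
move=> HB; apply: (open_ext _ (open_union HB)) => y.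
by split=> [[i nB] HB' | /not_all_ex_not].
Qed.

Lemma Fclass_ext a A A' :
  Fclass tau a A -> (forall y, A y <-> A' y) -> Fclass tau a A'.
Proof.
case=> {a A} [a A Ha HA | a A b B H0 Ho Hb HB E' | a A b B H0 Ho Hb HB E'] E.
- by apply: F_zero => //; apply: closed_ext HA E.
- by apply: (F_union H0 Ho Hb HB) => y; rewrite -E.
- by apply: (F_inter H0 Ho Hb HB) => y; rewrite -E.
Qed.

Lemma Fclass_le0_closed a A : Fclass tau a A -> ole a OZ -> is_closed tau A.
Proof.
by case=> {a A} [//|a A b B H0 _ _ _ _ Ha|a A b B H0 _ _ _ _ Ha];
  case: (olt_OZ (ole_trans H0 Ha)).
Qed.

Lemma Fclass_lt b a A : olt b a -> Fclass tau b A -> Fclass tau a A.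
Proof.
move=> Hba HA; have H0 : olt OZ a := ole_trans (ole_succ (ole_zero b)) Hba.
case: (classic (odd_ord a)) => Ho.
- apply: (F_union (b := fun _ => b) (B := fun _ => A) H0 Ho) => // y.
  by split=> [HAy|[]] //; exists 0.
- apply: (F_inter (b := fun _ => b) (B := fun _ => A) H0 Ho) => // y.
  by split=> [|/(_ 0)].
Qed.

Lemma Fclass_closed a A : is_closed tau A -> Fclass tau a A.
Proof.
move=> HA; case: (ole_total a OZ) => Ha; first exact: F_zero.
by apply: Fclass_lt Ha _; apply: F_zero => //; apply: ole_refl.
Qed.

Lemma Fclass_oeq b a A : oeq b a -> Fclass tau b A -> Fclass tau a A.
Proof.
move=> + HA; case: HA => {b A} [b A Hb HA | b A c B H0 Ho Hc HB E | b A c B H0 Ho Hc HB E].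
all: move=> [Hba Hab].
- by apply: F_zero => //; apply: ole_trans Hab Hb.
- apply: (F_union (b := c) (B := B)) => //; first exact: ole_trans H0 Hba.
    exact: odd_ord_oeq (conj Hba Hab) Ho.
  by move=> k; apply: ole_trans (Hc k) Hba.
- apply: (F_inter (b := c) (B := B)) => //; first exact: ole_trans H0 Hba.
    by move/(odd_ord_oeq (conj Hab Hba)).
  by move=> k; apply: ole_trans (Hc k) Hba.
Qed.

Lemma Fclass_le b a A : ole b a -> Fclass tau b A -> Fclass tau a A.
Proof. by case/ole_eq_or_lt; [apply: Fclass_oeq | apply: Fclass_lt]. Qed.

Lemma Fclass_guard (P : Prop) a A :
  (P -> Fclass tau a A) -> Fclass tau a (fun y => P /\ A y).
Proof.
case: (classic P) => [HP /(_ HP) HA | nP _].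
- by apply: (Fclass_ext HA) => y; split=> [|[]].
- by apply: (Fclass_ext (Fclass_closed a closed_False)) => y; split=> [[]|[]].
Qed.

Lemma Fclass_imply (P : Prop) a A :
  (P -> Fclass tau a A) -> Fclass tau a (fun y => P -> A y).
Proof.
case: (classic P) => [HP /(_ HP) HA | nP _].
- by apply: (Fclass_ext HA) => y; split=> [|/(_ HP)].
- by apply: (Fclass_ext (Fclass_closed a closed_True)).
Qed.

Lemma Fclass_bigcup (I : countType) c a (B : I -> Y -> Prop) :
  olt c a -> odd_ord a -> (forall i, Fclass tau c (B i)) ->
  Fclass tau a (fun y => exists i, B i y).
Proof.
move=> Hca Ho HB.
pose B' n := if unpickle n is Some i then B i else fun _ => False.
apply: (F_union (b := fun _ => c) (B := B') _ Ho) => //.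
- exact: ole_trans (ole_succ (ole_zero c)) Hca.
- move=> n; rewrite /B'; case: (unpickle n) => [i|]; first exact: HB.
  exact: Fclass_closed closed_False.
- move=> y; split=> [[i Hi] | [n]]; first by exists (pickle i); rewrite /B' pickleK.
  by rewrite /B'; case: (unpickle n) => [i Hi|//]; exists i.
Qed.

Lemma Fclass_even_inv a A : Fclass tau a A -> olt OZ a -> ~ odd_ord a ->
  exists (b : nat -> ord) (B : nat -> Y -> Prop), (forall k, olt (b k) a) /\
    (forall k, Fclass tau (b k) (B k)) /\ (forall y, A y <-> forall k, B k y).
Proof.
case=> {a A} [a A Ha _ H0 | a A b B _ Ho _ _ _ _ /(_ Ho) [] | a A b B _ _ Hb HB E _ _].
- by case: (olt_OZ (ole_trans H0 Ha)).
- by exists b, B.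
Qed.

Lemma Fclass_bigcap (I : countType) a (B : I -> Y -> Prop) :
  ~ odd_ord a -> (forall i, Fclass tau a (B i)) ->
  Fclass tau a (fun y => forall i, B i y).
Proof.
move=> Ho HB; case: (ole_total a OZ) => Ha.
  by apply: F_zero => //; apply: closed_bigcap => i; apply: Fclass_le0_closed (HB i) Ha.
have Hinv i : exists q : (nat -> ord) * (nat -> Y -> Prop),
    (forall k, olt (q.1 k) a /\ Fclass tau (q.1 k) (q.2 k)) /\
    (forall y, B i y <-> forall k, q.2 k y).
  have [b [B' [Hb [HB' E]]]] := Fclass_even_inv (HB i) Ha Ho.
  by exists (b, B').
have [p Hp] := functional_choice _ Hinv.
pose b n := if unpickle n is Some (i, k) then (p i).1 k else OZ.
pose B' n := if unpickle n is Some (i, k) then (p i).2 k else fun _ : Y => True.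
apply: (F_inter (b := b) (B := B') Ha Ho).
- by move=> n; rewrite /b; case: (unpickle n) => [[i k]|//]; case: (Hp i) => /(_ k) [].
- move=> n; rewrite /b /B'; case: (unpickle n) => [[i k]|].
    by case: (Hp i) => /(_ k) [].
  exact: F_zero (ole_refl _) closed_True.
- move=> y; split=> [HBy n | HB'y i]; rewrite /B'.
    by case: (unpickle n) => [[i k]|//]; case: (Hp i) => _ /(_ y) [/(_ (HBy i))].
  case: (Hp i) => _ /(_ y) [_]; apply=> k.
  by have := HB'y (pickle (i, k)); rewrite /B' pickleK.
Qed.

Lemma Fclass_cap_bigcap a A (P : nat -> Prop) (B : nat -> Y -> Prop) :
  ~ odd_ord a -> Fclass tau a A -> (forall k, P k -> Fclass tau a (B k)) ->
  Fclass tau a (fun y => A y /\ forall k, P k -> B k y).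
Proof.
move=> Ho HA HB.
pose B' o := if o is Some k then fun y => P k -> B k y else A.
have HB' o : Fclass tau a (B' o) by case: o => [k|] //; apply: Fclass_imply; apply: HB.
apply: (Fclass_ext (Fclass_bigcap Ho HB')) => y.
split=> [HB'y | [HAy HBy] [k|] //]; last exact: HBy.
by split=> [|k]; [apply: HB'y None | apply: HB'y (Some k)].
Qed.

End FBorel.

Definition subtree (T : pred (seq nat)) (t : seq nat) : pred (seq nat) :=
  fun u => T (t ++ u).

Definition shift (Y : Type) (D : seq nat -> Y -> Prop) (s : seq nat) :
  seq nat -> Y -> Prop := fun u => D (s ++ u).

Section Unfolding.
Variables (Y : Type) (T : pred (seq nat)) (t : seq nat) (D : seq nat -> Y -> Prop) (y : Y).

Lemma R_T_subtree_child k : R_T (subtree T t) D y -> T (rcons t k) ->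
  exists s, size s = k /\ R_T (subtree T (rcons t k)) (shift D s) y.
Proof.
move=> [_ [phi [[phi_mono phi_size] phi_D]]] Tk.
have Tk' : subtree T t [:: k] by rewrite /subtree cats1.
have Tcons u : subtree T (rcons t k) u -> subtree T t (k :: u) by rewrite /subtree cat_rcons.
have size_k : size (phi [:: k]) = k by rewrite phi_size //= addn0.
pose psi u := drop k (phi (k :: u)).
have phi_cons u : subtree T (rcons t k) u -> phi (k :: u) = phi [:: k] ++ psi u.
  move=> Tu; have /prefixP [c E] := phi_mono _ _ Tk' (Tcons _ Tu) (prefix_prefix [:: k] u).
  by rewrite /psi E drop_size_cat.
exists (phi [:: k]); split=> //; split; first by rewrite /shift cats0; apply: phi_D.
exists psi; split; first split.
- move=> u v Tu Tv uv; have := phi_mono _ _ (Tcons _ Tu) (Tcons _ Tv).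
  by rewrite /= eqxx (phi_cons u) // (phi_cons v) // prefix_catr // eqxx; apply.
- by move=> u Tu; rewrite size_drop phi_size ?Tcons //= addKn.
- by move=> u Tu; rewrite /shift -phi_cons //; apply/phi_D/Tcons.
Qed.

Lemma R_T_subtree_glue : is_tree T -> D [::] y ->
  (forall k, T (rcons t k) ->
     exists s, size s = k /\ R_T (subtree T (rcons t k)) (shift D s) y) ->
  R_T (subtree T t) D y.
Proof.
move=> HT HD Hch.
have Hsel k : exists p : seq nat * (seq nat -> seq nat), T (rcons t k) ->
    size p.1 = k /\ admissible (subtree T (rcons t k)) p.2 /\
    (forall u, subtree T (rcons t k) u -> D (p.1 ++ p.2 u) y).
  case Tk: (T (rcons t k)); last by exists ([::], id).
  by have [s [Hs [_ [psi [Hpsi HD']]]]] := Hch k Tk; exists (s, psi).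
have [sel Hsel'] := functional_choice _ Hsel.
have Tcons k u : subtree T t (k :: u) -> T (rcons t k) /\ subtree T (rcons t k) u.
  by rewrite /subtree -cat_rcons => Tu; split=> //; apply: HT Tu.
split=> //; exists (fun u => if u is k :: u' then (sel k).1 ++ (sel k).2 u' else [::]).
split; first split.
- move=> [|k u] [|k' v] //= Tu Tv; first by rewrite prefix0s.
  case/andP=> /eqP Ekk uv; subst k'.
  have [Tk Tu'] := Tcons _ _ Tu; have [_ Tv'] := Tcons _ _ Tv.
  have [_ [[psi_mono _] _]] := Hsel' k Tk.
  by rewrite prefix_catr // eqxx /=; apply: psi_mono.
- move=> [|k u] //= /Tcons [Tk Tu]; have [Hs [[_ psi_size] _]] := Hsel' k Tk.
  by rewrite size_cat Hs psi_size.
- move=> [|k u] //= /Tcons [Tk Tu]; have [_ [_ HD']] := Hsel' k Tk.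
  exact: HD'.
Qed.

Lemma R_T_subtree_unfold : is_tree T ->
  R_T (subtree T t) D y <-> D [::] y /\ forall k, T (rcons t k) ->
     exists s, size s = k /\ R_T (subtree T (rcons t k)) (shift D s) y.
Proof.
move=> HT; split=> [HR | [HD Hch]]; last exact: R_T_subtree_glue.
by split=> [|k]; [case: HR | apply: R_T_subtree_child].
Qed.

End Unfolding.

Lemma child_rank_lt (T : pred (seq nat)) t (r : nat -> ord) k x : T (rcons t k) ->
  ole (OL (fun k => if T (rcons t k) then OS (r k) else OZ)) x -> olt (r k) x.
Proof.
by move=> Tk; apply: ole_trans; apply: (ole_cocone (k := k)); rewrite Tk; apply: ole_refl.
Qed.

Lemma leaf_rank_finite_succ (T : pred (seq nat)) t r l n : leaf_rank T t r ->
  (exists k, T (rcons t k)) -> (exists N, forall k, T (rcons t k) -> k < N) ->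
  limit_or_zero l -> oeq r (oadd l n) -> 0 < n.
Proof.
case=> {}t {}r _ [k0 Tk0] [N HN] Hl; case: n => // [[Hrl Hlr]].
pose f k := if T (rcons t k) then OS (r k) else OZ.
have [m Hm] := ole_max_finite f N.
have Hfm : ole (OL f) (f m).
  apply: ole_limiting => k; case Tk: (T (rcons t k)); first exact/Hm/HN.
  by rewrite /f Tk; apply: ole_zero.
case Tm: (T (rcons t m)) (Hm k0 (HN k0 Tk0)); rewrite /f Tm Tk0 => Hk0m;
  last by case: (olt_OZ Hk0m).
case: (limit_neq_S (x := r m) Hl); split; last exact: child_rank_lt Tm Hrl.
by apply: ole_trans Hlr _; move: Hfm; rewrite /f Tm.
Qed.

Section LeafRankInduction.
Variables (Y : Type) (tau : topology Y) (T : pred (seq nat)).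
Hypothesis HT : is_tree T.

Lemma Fclass_R_T_subtree t r : leaf_rank T t r ->
  forall l n (D : seq nat -> Y -> Prop), limit_or_zero l -> oeq r (oadd l n) ->
  (forall s, is_closed tau (D s)) -> Fclass tau (oadd l (2 * n)) (R_T (subtree T t) D).
Proof.
elim=> {}t {}r _ IH l n D Hl [Hrl _] HD.
have Hchild k : T (rcons t k) -> Fclass tau (oadd l (2 * n))
    (fun y => exists s, size s = k /\ R_T (subtree T (rcons t k)) (shift D s) y).
  move=> Tk; have [lk [nk [Hlk [Hkl Hlk']]]] := ord_normal_form (r k).
  have Hlt : olt (oadd lk nk) (oadd l n) := ole_trans (ole_succ Hlk') (child_rank_lt Tk Hrl).
  apply: Fclass_lt (olt_oadd_double Hl Hlt) _.
  apply: (Fclass_bigcup (I := seq nat) (ole_refl _) (oadd_doubleS_odd nk Hlk)) => s.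
  by apply: Fclass_guard => _; apply: IH => // u; apply: HD.
have Hroot := Fclass_closed (oadd l (2 * n)) (HD [::]).
apply: (Fclass_ext (Fclass_cap_bigcap (oadd_double_not_odd Hl) Hroot Hchild)).
by move=> y; rewrite R_T_subtree_unfold.
Qed.

Lemma Fclass_R_T_subtree_finite t r l n (D : seq nat -> Y -> Prop) : leaf_rank T t r ->
  (exists N, forall k, T (rcons t k) -> k < N) ->
  limit_or_zero l -> oeq r (oadd l n.+1) -> (forall s, is_closed tau (D s)) ->
  Fclass tau (oadd l (2 * n).+1) (R_T (subtree T t) D).
Proof.
case=> {}t {}r Hr [N HN] Hl [Hrl _] HD.
pose E ss y := D [::] y /\ forall k, T (rcons t k) -> size (nth [::] ss k) = k /\
  R_T (subtree T (rcons t k)) (shift D (nth [::] ss k)) y.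
have HE ss : Fclass tau (oadd l (2 * n)) (E ss).
  apply: Fclass_cap_bigcap (oadd_double_not_odd Hl) (Fclass_closed _ (HD [::])) _ => k Tk.
  apply: Fclass_guard => _; have [lk [nk [Hlk [Hkl Hlk']]]] := ord_normal_form (r k).
  apply: Fclass_le (Fclass_R_T_subtree (Hr k Tk) Hlk (conj Hkl Hlk') (fun u => HD _)).
  by apply: ole_oadd_double Hl _; apply: ole_trans Hlk' _; apply/ole_S_inv/(child_rank_lt Tk Hrl).
apply: (Fclass_ext (Fclass_bigcup (I := seq (seq nat)) (ole_refl _) (oadd_doubleS_odd n Hl) HE)).
move=> y; rewrite R_T_subtree_unfold //; split=> [[ss [HD0 Hss]] | [HD0 Hch]].
  by split=> // k Tk; exists (nth [::] ss k); apply: Hss.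
have Hs k : exists s, T (rcons t k) ->
    size s = k /\ R_T (subtree T (rcons t k)) (shift D s) y.
  by case Tk: (T (rcons t k)); [have [s Hs] := Hch k Tk; exists s | exists [::]].
have [s Hs'] := functional_choice _ Hs.
by exists (mkseq s N); split=> // k Tk; rewrite nth_mkseq ?HN //; apply: Hs'.
Qed.

End LeafRankInduction.

Theorem lemma6p5 (Y : Type) (tau : topology Y) (C : seq nat -> Y -> Prop)
  (T : pred (seq nat)) (l a : ord) (n : nat) :
  suslin_scheme C ->
  (forall s, is_closed tau (C s)) ->
  is_tree T -> T [::] -> well_founded_tree T ->
  leaf_rank T [::] a -> limit_or_zero l -> oeq a (oadd l n) ->
  Fclass tau (oadd l (2 * n)) (R_T T C) /\
  ((exists t, T t /\ t <> [::]) ->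
   (exists N, forall k, T [:: k] -> k < N) ->
   1 <= n /\ Fclass tau (oadd l (2 * n - 1)) (R_T T C)).
Proof.
move=> _ HC HT _ _ Ha Hl Hal; split; first exact: (Fclass_R_T_subtree HT Ha Hl Hal HC).
move=> [[|k u] [Tu _]] // HN.
have Hn := leaf_rank_finite_succ Ha (ex_intro _ k (HT [:: k] u Tu)) HN Hl Hal.
split=> //; case: n Hn Hal => // n _ Hal.
rewrite (_ : 2 * n.+1 - 1 = (2 * n).+1); last by lia.
exact: (Fclass_R_T_subtree_finite HT Ha HN Hl Hal HC).
Qed.
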